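(* Fix $d\ge1$, $N\ge1$, $\alpha\ge2$, powers $P_s,P_r>0$, gains $\xi_{u,v}>0$, and positions $\mathbf{s},\mathbf{1},\dots,\mathbf{N}\in\mathbb{R}^d$ with $\mathbf{s}\neq\mathbf{j}$ for all $j$. For a relay position $\mathbf{r}\in\mathbb{R}^d$ let $\mathsf{SNR}_{u,v}=\xi_{u,v}P_u/\|\mathbf{u}-\mathbf{v}\|^{\alpha}$ for $(u,v)\in\{(s,r),(s,j),(r,j)\}$ (an SNR being $+\infty$ when the distance is $0$). With $\mathsf{C}(x)=\tfrac12\log(1+x)$, $f_j(\rho,\mathbf{r})=\mathsf{SNR}_{s,j}+\mathsf{SNR}_{r,j}+2\rho\sqrt{\mathsf{SNR}_{s,j}\mathsf{SNR}_{r,j}}$, $g^*_j(\rho,\mathbf{r})=(1-\rho^2)\mathsf{SNR}_{s,r}$, $$R_{DF}(\rho,\mathbf{r})=\min_{1\le j\le N}\min\big(\mathsf{C}(f_j(\rho,\mathbf{r})),\mathsf{C}(g^*_j(\rho,\mathbf{r}))\big),\qquad R_{DF}(\mathbf{r})=\max_{\rho\in[0,1]}R_{DF}(\rho,\mathbf{r}),$$ the map $(t,\mathbf{r})\mapsto R_{DF}(\sqrt t,\mathbf{r})$ is quasi-concave on $[0,1]\times\mathbb{R}^d$ (i.e., $R_{DF}(\rho,\mathbf{r})$ is quasi-concave in $(\rho^2,\mathbf{r})$), and $R_{DF}(\mathbf{r})$ is quasi-concave in $\mathbf{r}\in\mathbb{R}^d$.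
   Context: Setting: real AWGN multicast relay channel (decode-forward rate) with source $s$, relay at position $\mathbf{r}$, destinations $1,\dots,N$, path-loss exponent $\alpha$ and channel gains $a_{u,v}=\sqrt{\xi_{u,v}}/\|\mathbf{u}-\mathbf{v}\|^{\alpha/2}$; $\rho$ is the source–relay input correlation coefficient. A function $F$ (possibly taking value $+\infty$) on a convex set is quasi-concave if $F(\lambda x_1+(1-\lambda)x_2)\ge\min(F(x_1),F(x_2))$ for all $x_1,x_2$ and $\lambda\in[0,1]$. *)

From HB Require Import structures.
From mathcomp Require Import all_boot all_order all_algebra.
From mathcomp Require Import all_classical all_reals all_analysis.
Set Implicit Arguments. Unset Strict Implicit. Unset Printing Implicit Defensive.
Import Order.TTheory GRing.Theory Num.Theory.
Local Open Scope ring_scope.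
Local Open Scope classical_set_scope.

Section DF.
Variable R : realType.

Definition edist (d : nat) (u v : 'rV[R]_d) : R :=
  Num.sqrt (\sum_(i < d) (u ord0 i - v ord0 i) ^+ 2).

Definition SNR (d : nat) (alpha xi P : R) (u v : 'rV[R]_d) : \bar R :=
  if edist u v == 0 then +oo%E else (xi * P / (edist u v `^ alpha))%:E.

Definition esqrt (x : \bar R) : \bar R :=
  match x with
  | r%:E => (Num.sqrt r)%:E
  | +oo%E => +oo%E
  | -oo%E => 0%E
  end.

Definition Ccap (x : \bar R) : \bar R :=
  match x with
  | r%:E => (ln (1 + r) / 2)%:E
  | +oo%E => +oo%E
  | -oo%E => -oo%E
  end.

Definition quasi_concave_on (V : lmodType R) (D : set V) (F : V -> \bar R) :=
  forall x1 x2 : V, D x1 -> D x2 -> forall l : R, 0 <= l <= 1 ->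
    (Order.min (F x1) (F x2) <= F (l *: x1 + (1 - l) *: x2)%R)%E.

Definition RDF_rho (d N : nat) (alpha Ps Pr xi_sr : R) (xi_sj xi_rj : 'I_N -> R)
  (s : 'rV[R]_d) (dst : 'I_N -> 'rV[R]_d) (rho : R) (r : 'rV[R]_d) : \bar R :=
  \big[Order.min/+oo%E]_(j < N)
    Order.min
      (Ccap (SNR alpha (xi_sj j) Ps s (dst j) + SNR alpha (xi_rj j) Pr r (dst j)
             + (2 * rho)%:E * esqrt (SNR alpha (xi_sj j) Ps s (dst j)
                                     * SNR alpha (xi_rj j) Pr r (dst j))))%E
      (Ccap ((1 - rho ^+ 2)%:E * SNR alpha xi_sr Ps s r))%E.

Definition RDF (d N : nat) (alpha Ps Pr xi_sr : R) (xi_sj xi_rj : 'I_N -> R)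
  (s : 'rV[R]_d) (dst : 'I_N -> 'rV[R]_d) (r : 'rV[R]_d) : \bar R :=
  ereal_sup [set RDF_rho alpha Ps Pr xi_sr xi_sj xi_rj s dst rho r
            | rho in `[0, 1]%classic].

End DF.

From Pilot Require Import Defs.
From HB Require Import structures.
From mathcomp Require Import all_boot all_order all_algebra.
From mathcomp Require Import all_classical all_reals all_analysis.
From mathcomp Require Import ring lra.
Import Order.TTheory GRing.Theory Num.Theory.
Set Implicit Arguments.
Unset Strict Implicit.
Unset Printing Implicit Defensive.
Local Open Scope ring_scope.
Local Open Scope classical_set_scope.

(* Write t = rho^2.  Since C is nondecreasing on [0, +oo] and minima of
   quasi-concave functions are quasi-concave, it suffices that every
   superlevel set {c <= f_j} and {c <= g*} (c > 0) is convex in (t, r).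
   For g* = (1 - t) K / |s - r|^alpha this reads |s - r|^alpha <= (1 - t) K / c,
   a convex function of r below an affine function of t.  For
   f_j = A + x + 2 sqrt(t A x) with A = SNR_{s,j} and x = K / |r - j|^alpha,
   solving the quadratic in sqrt x turns {c <= f_j} (c > A) into
   |r - j|^(alpha/2) <= sqrt K (sqrt(t A + c - A) + sqrt(t A)) / (c - A),
   again convex (alpha/2 >= 1) below concave.  Finally R_DF(r) is the
   supremum over t of a jointly quasi-concave function, hence quasi-concave. *)

Section RealInequalities.
Variable R : realType.

Lemma sqrtr_concave (x y l : R) : 0 <= x -> 0 <= y -> 0 <= l <= 1 ->
  l * Num.sqrt x + (1 - l) * Num.sqrt y <= Num.sqrt (l * x + (1 - l) * y).
Proof.
move=> x0 y0 /andP[l0 l1].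
have lhs0 : 0 <= l * Num.sqrt x + (1 - l) * Num.sqrt y.
  by rewrite addr_ge0 // mulr_ge0 ?sqrtr_ge0 ?subr_ge0.
rewrite -(ger0_norm lhs0) -sqrtr_sqr ler_sqrt ?addr_ge0 ?mulr_ge0 ?subr_ge0 //.
rewrite -{2}(sqr_sqrtr x0) -{2}(sqr_sqrtr y0).
have ll0 : 0 <= l * (1 - l) by rewrite mulr_ge0 ?subr_ge0.
have := sqr_ge0 (Num.sqrt x - Num.sqrt y); nra.
Qed.

Lemma powR_le_conv (a D D1 D2 l : R) : 1 <= a -> 0 <= l <= 1 ->
  0 <= D -> 0 <= D1 -> 0 <= D2 -> D <= l * D1 + (1 - l) * D2 ->
  D `^ a <= l * D1 `^ a + (1 - l) * D2 `^ a.
Proof.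
move=> a1 /andP[l0 l1] D0 D10 D20 DD.
have conv0 : 0 <= l * D1 + (1 - l) * D2 by rewrite addr_ge0 // mulr_ge0 ?subr_ge0.
apply: (le_trans (ge0_ler_powR (le_trans ler01 a1) _ _ DD)); rewrite ?nnegrE //.
have := @convex_powR R a a1 (Itv01 l0 l1) D1 D2.
by rewrite !inE /= !in_itv /= !andbT !convRE; apply.
Qed.

Lemma quadratic_levelE (p q w e : R) : 0 <= p -> 0 <= q -> 0 <= w -> 0 < e ->
  q ^+ 2 = p ^+ 2 + e -> (e <= w ^+ 2 + 2 * p * w) = (e <= w * (q + p)).
Proof.
move=> p0 q0 w0 e0 qpe.
have q2_gt0 : 0 < q ^+ 2 by rewrite qpe; nra.
have qp_gt0 : 0 < q + p by nra.
(* both sides say that w + p >= q *)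
apply/idP/idP => h.
- have : q ^+ 2 <= (w + p) ^+ 2 by nra.
  rewrite ler_sqr ?nnegrE ?addr_ge0 //; nra.
- have : (q - p) * (q + p) <= w * (q + p) by nra.
  rewrite ler_pM2r //; nra.
Qed.

Lemma sqrtr_sum_affine_concave (A b t1 t2 l : R) :
  0 <= A -> 0 <= b -> 0 <= t1 -> 0 <= t2 -> 0 <= l <= 1 ->
  l * (Num.sqrt (t1 * A + b) + Num.sqrt (t1 * A))
    + (1 - l) * (Num.sqrt (t2 * A + b) + Num.sqrt (t2 * A)) <=
  Num.sqrt ((l * t1 + (1 - l) * t2) * A + b)
    + Num.sqrt ((l * t1 + (1 - l) * t2) * A).
Proof.
move=> A0 b0 t10 t20 l01.
have -> : (l * t1 + (1 - l) * t2) * A + b = l * (t1 * A + b) + (1 - l) * (t2 * A + b).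
  by ring.
have -> : (l * t1 + (1 - l) * t2) * A = l * (t1 * A) + (1 - l) * (t2 * A) by ring.
rewrite [l * (Num.sqrt _ + _)]mulrDr [(1 - l) * (Num.sqrt _ + _)]mulrDr addrACA.
have [t1A t2A] : 0 <= t1 * A /\ 0 <= t2 * A by rewrite !mulr_ge0.
by apply: lerD; apply: sqrtr_concave; rewrite // addr_ge0.
Qed.

End RealInequalities.

Section EuclideanDistance.
Variable R : realType.
Implicit Types (d : nat) (l : R).

Lemma sum_sqr_ge0 d (a : 'I_d -> R) : 0 <= \sum_i a i ^+ 2.
Proof. by apply: sumr_ge0 => i _; rewrite sqr_ge0. Qed.

Lemma sum_sqr_eq0 d (a : 'I_d -> R) : \sum_i a i ^+ 2 = 0 -> forall i, a i = 0.
Proof.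
move=> a0 i; apply/eqP; rewrite -sqrf_eq0; apply/eqP.
exact: (psumr_eq0P (fun i _ => sqr_ge0 (a i)) a0).
Qed.

Lemma cauchy_schwarz_sum d (a b : 'I_d -> R) :
  \sum_i a i * b i <= Num.sqrt (\sum_i a i ^+ 2) * Num.sqrt (\sum_i b i ^+ 2).
Proof.
set A := \sum_i a i ^+ 2; set B := \sum_i b i ^+ 2.
have [sA sB] : Num.sqrt A ^+ 2 = A /\ Num.sqrt B ^+ 2 = B.
  by rewrite !sqr_sqrtr ?sum_sqr_ge0.
move: (sqrtr_ge0 A) (sqrtr_ge0 B) sA sB.
set s := Num.sqrt A; set t := Num.sqrt B => s0 t0 sA sB.
have [s_eq0|s_neq0] := eqVneq s 0.
  have /sum_sqr_eq0 a0 : A = 0 by rewrite -sA s_eq0 expr0n.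
  by rewrite s_eq0 mul0r big1 // => i _; rewrite a0 mul0r.
have [t_eq0|t_neq0] := eqVneq t 0.
  have /sum_sqr_eq0 b0 : B = 0 by rewrite -sB t_eq0 expr0n.
  by rewrite t_eq0 mulr0 big1 // => i _; rewrite b0 mulr0.
have st_gt0 : 0 < s * t by rewrite mulr_gt0 // lt0r ?s_neq0 ?t_neq0.
(* termwise AM-GM: 2 (a_i t) (b_i s) <= (a_i t)^2 + (b_i s)^2 *)
have : 2 * (\sum_i a i * b i) * (s * t) <= A * t ^+ 2 + B * s ^+ 2.
  rewrite /A /B !mulr_suml -big_split /= mulr_sumr mulr_suml.
  apply: ler_sum => i _; have := sqr_ge0 (a i * t - b i * s); nra.
rewrite -[in A * _]sA -[in B * _]sB; nra.
Qed.

Lemma sqrt_sum_sqr_conv d (a b : 'I_d -> R) l : 0 <= l <= 1 ->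
  Num.sqrt (\sum_i (l * a i + (1 - l) * b i) ^+ 2) <=
  l * Num.sqrt (\sum_i a i ^+ 2) + (1 - l) * Num.sqrt (\sum_i b i ^+ 2).
Proof.
move=> /andP[l0 l1].
have -> : \sum_i (l * a i + (1 - l) * b i) ^+ 2 =
    l ^+ 2 * \sum_i a i ^+ 2 + (2 * l * (1 - l)) * \sum_i a i * b i
    + (1 - l) ^+ 2 * \sum_i b i ^+ 2.
  by rewrite !mulr_sumr -!big_split /=; apply: eq_bigr => i _; ring.
have := cauchy_schwarz_sum a b; have := sum_sqr_ge0 a; have := sum_sqr_ge0 b.
set A := \sum_i a i ^+ 2; set B := \sum_i b i ^+ 2 => B0 A0 cs.
have rhs0 : 0 <= l * Num.sqrt A + (1 - l) * Num.sqrt B.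
  by rewrite addr_ge0 // mulr_ge0 ?sqrtr_ge0 ?subr_ge0.
rewrite -(ger0_norm rhs0) -sqrtr_sqr ler_sqrt ?sqr_ge0 //.
have ll0 : 0 <= l * (1 - l) by rewrite mulr_ge0 ?subr_ge0.
have := ler_wpM2l ll0 cs; rewrite -{2}(sqr_sqrtr A0) -{2}(sqr_sqrtr B0).
move: cs; set s := Num.sqrt A; set t := Num.sqrt B; nra.
Qed.

Lemma euclid_dist_ge0 d (u v : 'rV[R]_d) : 0 <= Defs.edist u v.
Proof. exact: sqrtr_ge0. Qed.

Lemma euclid_dist_neq0 d (u v : 'rV[R]_d) : u != v -> Defs.edist u v != 0.
Proof.
apply: contraNneq; rewrite /Defs.edist => /eqP; rewrite sqrtr_eq0 => uv_le0.
have /sum_sqr_eq0 uv0 : \sum_i (u ord0 i - v ord0 i) ^+ 2 = 0.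
  by apply/eqP; rewrite eq_le uv_le0 sum_sqr_ge0.
by apply/eqP/rowP => i; apply/eqP; rewrite -subr_eq0 (uv0 i).
Qed.

Lemma euclid_dist_conv d (x1 x2 y1 y2 : 'rV[R]_d) l : 0 <= l <= 1 ->
  Defs.edist (l *: x1 + (1 - l) *: x2) (l *: y1 + (1 - l) *: y2) <=
  l * Defs.edist x1 y1 + (1 - l) * Defs.edist x2 y2.
Proof.
move=> l01; rewrite /Defs.edist.
rewrite (eq_bigr (fun i =>
  (l * (x1 ord0 i - y1 ord0 i) + (1 - l) * (x2 ord0 i - y2 ord0 i)) ^+ 2)).
  exact: sqrt_sum_sqr_conv.
by move=> i _; rewrite !mxE; congr (_ ^+ 2); ring.
Qed.

Lemma euclid_dist_powR_conv d (x1 x2 y1 y2 : 'rV[R]_d) (a l : R) :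
  1 <= a -> 0 <= l <= 1 ->
  Defs.edist (l *: x1 + (1 - l) *: x2) (l *: y1 + (1 - l) *: y2) `^ a <=
  l * Defs.edist x1 y1 `^ a + (1 - l) * Defs.edist x2 y2 `^ a.
Proof.
by move=> a1 l01; apply: powR_le_conv; rewrite ?euclid_dist_ge0 ?euclid_dist_conv.
Qed.

End EuclideanDistance.

Definition conv_closed (R : realType) (V : lmodType R) (D : set V) :=
  forall x1 x2, D x1 -> D x2 -> forall l, 0 <= l <= 1 -> D (l *: x1 + (1 - l) *: x2).

Lemma conv_closed_fst (R : realType) (V W : lmodType R) (A : set V) :
  conv_closed A -> conv_closed [set p : (V * W)%type | A p.1].
Proof. by move=> convA [t1 w1] [t2 w2] /= At1 At2 l l01; exact: convA. Qed.

Lemma conv_closed_itv01 (R : realType) : conv_closed [set t : R^o | 0 <= t <= 1].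
Proof.
move=> t1 t2 /andP[t10 t11] /andP[t20 t21] l /andP[l0 l1].
rewrite (_ : l *: t1 + (1 - l) *: t2 = l * t1 + (1 - l) * t2 :> R) //.
apply/andP; split; nra.
Qed.

Section QuasiConcavity.
Variables (R : realType) (V : lmodType R).
Implicit Types (D : set V) (F G : V -> \bar R).

Lemma quasi_concave_on_min D F G :
  quasi_concave_on D F -> quasi_concave_on D G ->
  quasi_concave_on D (fun x => Order.min (F x) (G x)).
Proof.
move=> qcF qcG x1 x2 Dx1 Dx2 l l01; rewrite le_min; apply/andP; split.
- by apply: le_trans (qcF _ _ Dx1 Dx2 _ l01); rewrite le_min !ge_min !lexx !orbT.
- by apply: le_trans (qcG _ _ Dx1 Dx2 _ l01); rewrite le_min !ge_min !lexx !orbT.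
Qed.

Lemma quasi_concave_on_bigmin D (n : nat) (F : 'I_n -> V -> \bar R) :
  (forall j, quasi_concave_on D (F j)) ->
  quasi_concave_on D (fun x => \big[Order.min/+oo%E]_(j < n) F j x).
Proof.
move=> qcF x1 x2 Dx1 Dx2 l l01; apply/bigmin_geP; split => [|j _]; first exact: leey.
apply: le_trans (qcF j _ _ Dx1 Dx2 _ l01).
by rewrite le_min !ge_min !bigmin_le ?orbT.
Qed.

Lemma quasi_concave_on_comp D F (phi : \bar R -> \bar R) :
  (forall x y, (0 <= x)%E -> (x <= y)%E -> (phi x <= phi y)%E) ->
  (forall x, D x -> (0 <= F x)%E) ->
  quasi_concave_on D F -> quasi_concave_on D (fun x => phi (F x)).
Proof.
move=> phi_nd F0 qcF x1 x2 Dx1 Dx2 l l01 /=.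
have Fmin := qcF _ _ Dx1 Dx2 _ l01.
have [F12|/ltW F21] := leP (F x1) (F x2).
- by rewrite (min_idPl F12) in Fmin; rewrite ge_min phi_nd ?F0.
- by rewrite (min_idPr F21) in Fmin; rewrite ge_min orbC phi_nd ?F0.
Qed.

Lemma quasi_concave_on_levels D F : conv_closed D ->
  (forall x, D x -> (0 <= F x)%E) ->
  (forall c : R, 0 < c -> forall x1 x2, D x1 -> D x2 -> forall l, 0 <= l <= 1 ->
     (c%:E <= F x1)%E -> (c%:E <= F x2)%E ->
     (c%:E <= F (l *: x1 + (1 - l) *: x2)%R)%E) ->
  quasi_concave_on D F.
Proof.
move=> convD F0 level x1 x2 Dx1 Dx2 l l01.
have Fconv0 := F0 _ (convD _ _ Dx1 Dx2 _ l01).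
have level_min c : 0 < c -> (c%:E <= Order.min (F x1) (F x2))%E ->
    (c%:E <= F (l *: x1 + (1 - l) *: x2)%R)%E.
  by move=> c0; rewrite le_min => /andP[c1 c2]; exact: level.
case Emin: (Order.min (F x1) (F x2)) level_min => [r| |] level_min.
- have [r0|r0] := lerP r 0; last by apply: level_min; rewrite ?Emin.
  by apply: le_trans Fconv0; rewrite lee_fin.
- move: Fconv0 level_min; case: (F _) => [s| |] // _ level_min.
  have s1_gt0 : 0 < `|s| + 1 by rewrite ltr_wpDl.
  move: (level_min _ s1_gt0); rewrite leey lee_fin => /(_ isT) s1_le.
  by exfalso; have := ler_norm s; lra.
- exact: leNye.
Qed.

End QuasiConcavity.

Lemma quasi_concave_on_ereal_sup (R : realType) (V W : lmodType R) (A : set V)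
    (F : (V * W)%type -> \bar R) :
  conv_closed A -> quasi_concave_on [set p | A p.1] F ->
  quasi_concave_on [set: W] (fun w => ereal_sup [set F (t, w) | t in A]).
Proof.
move=> convA qcF w1 w2 _ _ l l01; rewrite leNgt; apply/negP.
set S := ereal_sup _; rewrite lt_min => /andP[/ereal_sup_gt[_ [t1 At1 <-] S_lt1]].
move=> /ereal_sup_gt[_ [t2 At2 <-] S_lt2].
have := qcF (t1, w1) (t2, w2) At1 At2 _ l01.
have : (F (l *: t1 + (1 - l) *: t2, l *: w1 + (1 - l) *: w2)%R <= S)%E.
  by apply: ereal_sup_ubound; exists (l *: t1 + (1 - l) *: t2); first exact: convA.
by move=> /[swap] /le_trans /[apply]; rewrite leNgt lt_min S_lt1 S_lt2.
Qed.

Lemma esqrt_ge0 (R : realType) (x : \bar R) : (0 <= esqrt x)%E.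
Proof. by case: x => [r| |] //=; rewrite lee_fin sqrtr_ge0. Qed.

Lemma le_Ccap (R : realType) (x y : \bar R) :
  (0 <= x)%E -> (x <= y)%E -> (Ccap x <= Ccap y)%E.
Proof.
case: x => [r| |] //; case: y => [s| |] //= r0 rs; last exact: leey.
rewrite !lee_fin in r0 rs *; rewrite ler_pM2r ?invr_gt0 // ler_ln ?posrE; lra.
Qed.

Lemma image_itv01_sqrt (R : realType) (T : Type) (f : R -> T) :
  [set f rho | rho in `[0, 1]] = [set f (Num.sqrt t) | t in [set t : R | 0 <= t <= 1]].
Proof.
apply/seteqP; split => _ [x x01 <-].
  move: x01; rewrite /= in_itv /= => /andP[x0 x1].
  by exists (x ^+ 2); [rewrite sqr_ge0 expr_le1 | rewrite sqrtr_sqr ger0_norm].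
move: x01 => /= /andP[x0 x1]; exists (Num.sqrt x) => //=.
by rewrite in_itv /= sqrtr_ge0 -sqrtr1 ler_sqrt.
Qed.

Section SNR.
Variables (R : realType) (d : nat) (al xi P : R).
Hypothesis (xiP_gt0 : 0 < xi * P).

Lemma SNR_ge0 (u v : 'rV[R]_d) : (0 <= SNR al xi P u v)%E.
Proof. by rewrite /SNR; case: ifP; rewrite // lee_fin divr_ge0 ?powR_ge0 ?ltW. Qed.

Lemma SNR_edist0 (u v : 'rV[R]_d) : Defs.edist u v = 0 -> SNR al xi P u v = +oo%E.
Proof. by move=> uv0; rewrite /SNR uv0 eqxx. Qed.

Lemma SNR_fin (u v : 'rV[R]_d) :
  Defs.edist u v != 0 -> SNR al xi P u v = (xi * P / Defs.edist u v `^ al)%:E.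
Proof. by move=> /negbTE uv0; rewrite /SNR uv0. Qed.

Lemma scaled_SNR_ge0 (u v : 'rV[R]_d) (t : R) : 0 <= t <= 1 ->
  (0 <= (1 - Num.sqrt t ^+ 2)%:E * SNR al xi P u v)%E.
Proof.
by move=> /andP[t0 t1]; rewrite mule_ge0 ?SNR_ge0 // lee_fin sqr_sqrtr // subr_ge0.
Qed.

Lemma scaled_SNR_levelE (u v : 'rV[R]_d) (c t : R) : 0 < al -> 0 < c -> 0 <= t <= 1 ->
  (c%:E <= (1 - t)%:E * SNR al xi P u v)%E <->
  t < 1 /\ Defs.edist u v `^ al <= (1 - t) * (xi * P) / c.
Proof.
move=> al_gt0 c_gt0 /andP[t0 t1].
have [t_lt1|t_ge1] := ltP t 1; last first.
  have -> : t = 1 by apply: le_anti; rewrite t1 t_ge1.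
  by rewrite subrr mul0e lee_fin; split; [lra | case].
have [uv0|uv_neq0] := eqVneq (Defs.edist u v) 0.
  rewrite SNR_edist0 // mulry gtr0_sg ?subr_gt0 // mul1e leey uv0 powR0 ?gt_eqF //.
  split => // _; split => //; apply: divr_ge0; last exact: ltW.
  by rewrite mulr_ge0 ?subr_ge0 ?ltW.
have Dal_gt0 : 0 < Defs.edist u v `^ al.
  by rewrite powR_gt0 // lt0r uv_neq0 euclid_dist_ge0.
rewrite SNR_fin // -EFinM lee_fin mulrA ler_pdivlMr // ler_pdivlMr //.
by split => [|[]] //; lra.
Qed.

Lemma coherent_SNR_ge (u v : 'rV[R]_d) (A t : R) : 0 <= t ->
  (A%:E <= A%:E + SNR al xi P u v
           + (2 * Num.sqrt t)%:E * esqrt (A%:E * SNR al xi P u v))%E.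
Proof.
move=> t0; rewrite -addeA leeDl // adde_ge0 ?SNR_ge0 // mule_ge0 ?esqrt_ge0 //.
Qed.

Lemma coherent_SNR_levelE (u v : 'rV[R]_d) (A c t : R) :
  2 <= al -> 0 < A -> A < c -> 0 <= t ->
  (c%:E <= A%:E + SNR al xi P u v
           + (2 * Num.sqrt t)%:E * esqrt (A%:E * SNR al xi P u v))%E <->
  Defs.edist u v `^ (al / 2) <=
    Num.sqrt (xi * P) * (Num.sqrt (t * A + (c - A)) + Num.sqrt (t * A)) / (c - A).
Proof.
move=> al2 A_gt0 Ac t0.
have cA_gt0 : 0 < c - A by rewrite subr_gt0.
have al2_gt0 : 0 < al / 2 by rewrite divr_gt0 //; lra.
set k := Num.sqrt (xi * P); set q := Num.sqrt (t * A + (c - A)).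
set p := Num.sqrt (t * A).
have [k_gt0 q0 p0] : [/\ 0 < k, 0 <= q & 0 <= p] by rewrite sqrtr_gt0 !sqrtr_ge0.
have [uv0|uv_neq0] := eqVneq (Defs.edist u v) 0.
  rewrite SNR_edist0 // uv0 powR0 ?gt_eqF //; split => _.
    exact: divr_ge0 (mulr_ge0 (ltW k_gt0) (addr_ge0 q0 p0)) (ltW cA_gt0).
  rewrite mulry gtr0_sg // mul1e addey // addye ?leey //.
  rewrite gt_eqF // (lt_le_trans (ltNyr 0)) //.
  by rewrite mule_ge0 ?esqrt_ge0 // lee_fin mulr_ge0 ?sqrtr_ge0.
set E := Defs.edist u v `^ (al / 2).
have E_gt0 : 0 < E by rewrite powR_gt0 // lt0r uv_neq0 euclid_dist_ge0.
set w := k / E.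
have w_gt0 : 0 < w by rewrite divr_gt0.
have SNRw : xi * P / Defs.edist u v `^ al = w ^+ 2.
  rewrite expr_div_n sqr_sqrtr ?ltW // /E -powR_mulrn ?powR_ge0 //.
  by rewrite -powRrM divfK ?pnatr_eq0 ?powR_ge0.
rewrite SNR_fin // SNRw /= (sqrtrM _ (ltW A_gt0)) sqrtr_sqr gtr0_norm //.
rewrite -EFinM -!EFinD lee_fin.
have -> : A + w ^+ 2 + 2 * Num.sqrt t * (Num.sqrt A * w) = A + (w ^+ 2 + 2 * p * w).
  by rewrite /p sqrtrM //; ring.
rewrite -lerBlDl (quadratic_levelE p0 q0 (ltW w_gt0) cA_gt0); last first.
  have tA0 : 0 <= t * A by rewrite mulr_ge0 // ltW.
  by rewrite /q /p !sqr_sqrtr // addr_ge0 // ltW.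
by rewrite /w mulrAC !ler_pdivlMr // mulrC.
Qed.

Let conv_closed_unit_dom :
  conv_closed [set p : (R^o * 'rV[R]_d)%type | 0 <= p.1 <= 1].
Proof. exact: (@conv_closed_fst R R^o 'rV[R]_d _ (@conv_closed_itv01 R)). Qed.

Lemma quasi_concave_scaled_SNR (s : 'rV[R]_d) : 1 <= al ->
  quasi_concave_on [set p : (R^o * 'rV[R]_d)%type | 0 <= p.1 <= 1]
    (fun p => ((1 - Num.sqrt p.1 ^+ 2)%:E * SNR al xi P s p.2)%E).
Proof.
move=> al1; have al_gt0 : 0 < al by lra.
apply: quasi_concave_on_levels => [|[t r] /= t01|c c_gt0];
  [exact: conv_closed_unit_dom | exact: scaled_SNR_ge0 |].
move=> [t1 r1] [t2 r2] /= /andP[t10 t11] /andP[t20 t21] l l01.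
have /andP[l0 l1] := l01.
set t := l *: t1 + (1 - l) *: t2; have tE : t = l * t1 + (1 - l) * t2 :> R by [].
clearbody t.
have t01 : 0 <= t <= 1 by rewrite tE; apply/andP; split; nra.
rewrite !sqr_sqrtr ?(andP t01).1 //.
rewrite !scaled_SNR_levelE ?t10 ?t11 ?t20 ?t21 //.
move=> [t1_lt1 r1_le] [t2_lt1 r2_le]; split.
  by rewrite tE; have [t12|/ltW t21'] := leP t1 t2; nra.
have -> : s = l *: s + (1 - l) *: s by rewrite -scalerDl subrKC scale1r.
apply: le_trans (euclid_dist_powR_conv _ _ _ _ al1 l01) _.
have -> : (1 - t) * (xi * P) / c =
    l * ((1 - t1) * (xi * P) / c) + (1 - l) * ((1 - t2) * (xi * P) / c).
  by rewrite tE; field; rewrite gt_eqF.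
by apply: lerD; apply: ler_wpM2l; rewrite ?subr_ge0.
Qed.

Lemma quasi_concave_coherent_SNR (v : 'rV[R]_d) (A : R) : 2 <= al -> 0 < A ->
  quasi_concave_on [set p : (R^o * 'rV[R]_d)%type | 0 <= p.1 <= 1]
    (fun p => (A%:E + SNR al xi P p.2 v
               + (2 * Num.sqrt p.1)%:E * esqrt (A%:E * SNR al xi P p.2 v))%E).
Proof.
move=> al2 A_gt0; have al2_ge1 : 1 <= al / 2 by rewrite ler_pdivlMr //; lra.
apply: quasi_concave_on_levels => [|[t r] /= /andP[t0 _]|c c_gt0];
  [exact: conv_closed_unit_dom
  | by apply: le_trans (coherent_SNR_ge _ _ _ t0); rewrite lee_fin ltW |].
move=> [t1 r1] [t2 r2] /= /andP[t10 _] /andP[t20 _] l l01.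
have /andP[l0 l1] := l01.
set t := l *: t1 + (1 - l) *: t2; have tE : t = l * t1 + (1 - l) * t2 :> R by [].
clearbody t; have t0 : 0 <= t by rewrite tE; nra.
have [cA|Ac] := lerP c A.
  by move=> _ _; apply: le_trans (coherent_SNR_ge _ _ _ t0); rewrite lee_fin.
rewrite !coherent_SNR_levelE // => r1_le r2_le.
have -> : v = l *: v + (1 - l) *: v by rewrite -scalerDl subrKC scale1r.
apply: le_trans (euclid_dist_powR_conv _ _ _ _ al2_ge1 l01) _.
have cA_gt0 : 0 < c - A by rewrite subr_gt0.
have h_concave := sqrtr_sum_affine_concave (ltW A_gt0) (ltW cA_gt0) t10 t20 l01.
rewrite -tE in h_concave.
have l1' : 0 <= 1 - l by rewrite subr_ge0.
apply: le_trans (lerD (ler_wpM2l l0 r1_le) (ler_wpM2l l1' r2_le)) _.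
pose k := Num.sqrt (xi * P) / (c - A).
have kE H : Num.sqrt (xi * P) * H / (c - A) = k * H by rewrite mulrAC.
have k0 : 0 <= k by rewrite divr_ge0 ?sqrtr_ge0 // ltW.
by rewrite !kE mulrCA [(1 - l) * _]mulrCA -mulrDr ler_wpM2l.
Qed.

End SNR.

Theorem theorem5 (R : realType) (d N : nat) (alpha Ps Pr xi_sr : R)
  (xi_sj xi_rj : 'I_N -> R) (s : 'rV[R]_d) (dst : 'I_N -> 'rV[R]_d) :
  (1 <= d)%N -> (1 <= N)%N -> 2 <= alpha -> 0 < Ps -> 0 < Pr -> 0 < xi_sr ->
  (forall j, 0 < xi_sj j) -> (forall j, 0 < xi_rj j) ->
  (forall j, s != dst j) ->
  quasi_concave_on
    [set p : (R^o * 'rV[R]_d)%type | 0 <= p.1 <= 1]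
    (fun p => RDF_rho alpha Ps Pr xi_sr xi_sj xi_rj s dst (Num.sqrt p.1) p.2)
  /\
  quasi_concave_on [set: 'rV[R]_d]
    (RDF alpha Ps Pr xi_sr xi_sj xi_rj s dst).
Proof.
move=> _ _ alpha2 Ps_gt0 Pr_gt0 xi_sr_gt0 xi_sj_gt0 xi_rj_gt0 s_neq_dst.
have alpha1 : 1 <= alpha by lra.
have K_sr := mulr_gt0 xi_sr_gt0 Ps_gt0.
have K_rj j := mulr_gt0 (xi_rj_gt0 j) Pr_gt0.
pose F (p : (R^o * 'rV[R]_d)%type) :=
  RDF_rho alpha Ps Pr xi_sr xi_sj xi_rj s dst (Num.sqrt p.1) p.2.
have qcF : quasi_concave_on [set p : (R^o * 'rV[R]_d)%type | 0 <= p.1 <= 1] F.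
  apply: quasi_concave_on_bigmin => j; apply: quasi_concave_on_min.
  - have SNR_sj_gt0 : 0 < xi_sj j * Ps / Defs.edist s (dst j) `^ alpha.
      rewrite divr_gt0 ?mulr_gt0 // powR_gt0 // lt0r euclid_dist_ge0 andbT.
      exact: euclid_dist_neq0.
    rewrite SNR_fin ?euclid_dist_neq0 //.
    apply: (@quasi_concave_on_comp R _ _ _ (@Ccap R)); first exact: le_Ccap.
      move=> [t r] /= /andP[t0 _].
      apply: le_trans (coherent_SNR_ge _ (K_rj j) _ _ _ t0).
      by rewrite lee_fin ltW.
    exact (quasi_concave_coherent_SNR (K_rj j) (dst j) alpha2 SNR_sj_gt0).
  - apply: (@quasi_concave_on_comp R _ _ _ (@Ccap R)); first exact: le_Ccap.
      by move=> [t r] /= t01; exact: (scaled_SNR_ge0 _ K_sr).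
    exact (quasi_concave_scaled_SNR K_sr s alpha1).
split => //.
have -> : RDF alpha Ps Pr xi_sr xi_sj xi_rj s dst =
    fun r => ereal_sup [set F (t, r) | t in [set t : R^o | 0 <= t <= 1]].
  by apply/funext => r; rewrite /RDF image_itv01_sqrt.
exact: quasi_concave_on_ereal_sup (@conv_closed_itv01 R) qcF.
Qed.
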